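(* Let $\Omega\subset\mathbb{R}^d$ be open and connected, $m\ge1$, $p\colon\Omega\to[1,2]$ measurable, $X=L^2(\Omega,\mathbb{R}^m)$, $\rho_p(f)=\int_\Omega|f(x)|^{p(x)}\,dx$, and $\tau>0$. Then for every $f\in X$, $$M_\tau(\rho_p)(f)=\int_\Omega T_\tau\big(f(x),p(x)\big)\,dx,$$ where for $z\in\mathbb{R}^m$, $q\in[1,2]$, $$T_\tau(z,q)=\begin{cases}\frac{|z|^2}{2\tau}, & q=1,\ |z|\le\tau,\\ |z|-\frac{\tau}{2}, & q=1,\ |z|\ge\tau,\\ \frac{|z|^2}{1+2\tau}, & q=2,\\ (|z|-\bar\alpha)\,\frac{2\bar\alpha+q(|z|-\bar\alpha)}{2\tau q}, & 1<q<2.\end{cases}$$ Here $\bar\alpha=\bar\alpha(|z|,q,\tau)$ is the unique solution $\alpha\in[0,|z|)$ of $\alpha+\tau q\,\alpha^{q-1}=|z|$ when $z\neq0$, and $\bar\alpha=0$ when $z=0$.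
   Context: $|\cdot|$ is the Euclidean norm on $\mathbb{R}^m$ and $\|\cdot\|_2$ the norm of $X$. The Moreau envelope is $M_\tau(\rho_p)(f)=\inf_{g\in X}\big[\rho_p(g)+\frac{1}{2\tau}\|f-g\|_2^2\big]$. *)

From HB Require Import structures.
From mathcomp Require Import all_boot all_order all_algebra.
From mathcomp Require Import all_classical all_reals all_analysis.
Set Implicit Arguments. Unset Strict Implicit. Unset Printing Implicit Defensive.
Import Order.TTheory GRing.Theory Num.Theory.
Import numFieldNormedType.Exports.
Local Open Scope classical_set_scope.
Local Open Scope ring_scope.

(* Points of R^d are represented (for measure theory) as d-tuples of reals,
   carrying the library's product (= Borel) sigma-algebra on n.-tuple R. *)

Definition eucl {R : realType} {m : nat} (z : m.-tuple R) : R :=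
  Num.sqrt (\sum_(i < m) (tnth z i) ^+ 2).

Definition tsub {R : realType} {m : nat} (z w : m.-tuple R) : m.-tuple R :=
  [tuple tnth z i - tnth w i | i < m].

Definition rv_of_tuple {R : realType} {d : nat} (t : d.-tuple R) : 'rV[R]_d :=
  \row_(i < d) tnth t i.

(* mu is d-dimensional Lebesgue measure: the product of 1-d Lebesgue
   measures on boxes of measurable sets (this determines it on the product
   sigma-algebra). *)
Definition is_lebesgue_Rd {R : realType} {d : nat}
  (mu : {measure set (d.-tuple R) -> \bar R}) : Prop :=
  forall A : 'I_d -> set R, (forall i, measurable (A i)) ->
    mu [set t | forall i, A i (tnth t i)] = (\prod_(i < d) lebesgue_measure (A i))%E.

(* X = L^2(Omega, R^m) (representatives): measurable, square integrable. *)
Definition inL2 {R : realType} {d m : nat} (mu : {measure set (d.-tuple R) -> \bar R})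
  (D : set (d.-tuple R)) (f : d.-tuple R -> m.-tuple R) : Prop :=
  measurable_fun D f /\
  (\int[mu]_(x in D) ((eucl (f x)) ^+ 2)%:E < +oo)%E.

Definition rho_p {R : realType} {d m : nat} (mu : {measure set (d.-tuple R) -> \bar R})
  (D : set (d.-tuple R)) (p : d.-tuple R -> R) (f : d.-tuple R -> m.-tuple R) : \bar R :=
  (\int[mu]_(x in D) (powR (eucl (f x)) (p x))%:E)%E.

Definition L2sq {R : realType} {d m : nat} (mu : {measure set (d.-tuple R) -> \bar R})
  (D : set (d.-tuple R)) (f g : d.-tuple R -> m.-tuple R) : \bar R :=
  (\int[mu]_(x in D) ((eucl (tsub (f x) (g x))) ^+ 2)%:E)%E.

Definition moreau_rho {R : realType} {d m : nat} (mu : {measure set (d.-tuple R) -> \bar R})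
  (D : set (d.-tuple R)) (p : d.-tuple R -> R) (tau : R)
  (f : d.-tuple R -> m.-tuple R) : \bar R :=
  ereal_inf [set (rho_p mu D p g + ((2 * tau)^-1)%:E * L2sq mu D f g)%E
            | g in [set g | inL2 mu D g]].

Definition alpha_bar {R : realType} (r q tau : R) : R :=
  if r == 0 then 0
  else xget 0 [set a : R | 0 <= a < r /\ a + tau * q * powR a (q - 1) = r].

Definition T_tau {R : realType} {m : nat} (tau : R) (z : m.-tuple R) (q : R) : R :=
  let r := eucl z in
  if q == 1 then (if r <= tau then r ^+ 2 / (2 * tau) else r - tau / 2)
  else if q == 2 then r ^+ 2 / (1 + 2 * tau)
  else let a := alpha_bar r q tau in
       (r - a) * (2 * a + q * (r - a)) / (2 * tau * q).

(* For each x the integrand decouples: minimizing |w|^q + |z - w|^2/(2 tau) over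
   w in R^m, the reverse triangle inequality |z - w| >= | |z| - |w| | reduces it to
   the scalar problem min_(b >= 0) b^q + (|z| - b)^2/(2 tau), attained at w parallel
   to z.  By convexity of b |-> b^q that problem is solved by its optimality
   condition b + tau q b^(q-1) = |z| (or b = 0), and its value is T_tau(z, q).
   Integrating the pointwise bound gives M_tau(rho_p)(f) >= int T_tau; the pointwise
   minimizer g is in L^2 (|g| <= |f|) and measurable, because its sublevel sets are
   described by the monotone map b |-> b + tau q b^(q-1), which gives equality. *)

From HB Require Import structures.
From mathcomp Require Import all_boot all_order all_algebra.
From mathcomp Require Import all_classical all_reals all_analysis.
From mathcomp Require Import ring lra measurable_realfun.
Import Order.TTheory GRing.Theory Num.Theory.
Import numFieldNormedType.Exports.
Local Open Scope classical_set_scope.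
Local Open Scope ring_scope.
Set Implicit Arguments. Unset Strict Implicit. Unset Printing Implicit Defensive.

Section scalar_problem.
Variable R : realType.
Implicit Types tau q r a b c : R.

Lemma powR_tangent_le q a b : 1 <= q -> 0 <= a -> 0 <= b ->
  powR a q + q * powR a (q - 1) * (b - a) <= powR b q.
Proof.
move=> q1 a0 b0.
have [->|qn1] := eqVneq q 1.
  by rewrite subrr powRr0 !powRr1// mul1r; lra.
have q1' : 1 < q by rewrite lt_def qn1.
have q0 : 0 < q by rewrite (lt_trans _ q1').
have qm0 : 0 < q - 1 by rewrite subr_gt0.
set P := powR a (q - 1).
have P0 : 0 <= P by exact: powR_ge0.
have conj_q : q^-1 + (q / (q - 1))^-1 = 1.
  by rewrite invf_div -{1}(div1r q) -mulrDl subrKC mulfV// gt_eqF.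
(* Young's inequality with the conjugate exponents q and q/(q-1) *)
have := conjugate_powR b0 P0 q0 (divr_gt0 q0 qm0) conj_q.
have -> : powR P (q / (q - 1)) = a * P.
  by rewrite /P -powRrM mulrC divfK ?gt_eqF// mulr_powRB1.
rewrite invf_div => young.
have young' : q * (b * P) <= powR b q + (q - 1) * (a * P).
  have -> : powR b q + (q - 1) * (a * P) =
            q * (powR b q / q + a * P * ((q - 1) / q)) by field; rewrite gt_eqF.
  by rewrite ler_pM2l.
rewrite /P -mulr_powRB1 -/P; nra.
Qed.

Definition moreau_obj tau q r b := powR b q + (r - b) ^+ 2 / (2 * tau).

(* [tau] times the derivative of [moreau_obj tau q r] at [c > 0] is
   [prox_inv tau q c - r], so the minimizer is the inverse image of [r]. *)
Definition prox_inv tau q c := c + tau * q * powR c (q - 1).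

Lemma prox_inv_le tau q b c : 0 < tau -> 1 <= q -> 0 <= b -> b <= c ->
  prox_inv tau q b <= prox_inv tau q c.
Proof.
move=> t0 q1 b0 bc; rewrite /prox_inv lerD// ler_wpM2l//.
  by rewrite mulr_ge0// ltW// (lt_le_trans _ q1).
by apply: ge0_ler_powR; rewrite ?nnegrE ?subr_ge0// (le_trans b0).
Qed.

Lemma prox_inv_lt tau q b c : 0 < tau -> 1 <= q -> 0 <= b -> b < c ->
  prox_inv tau q b < prox_inv tau q c.
Proof.
move=> t0 q1 b0 bc; rewrite /prox_inv ltr_leD// ler_wpM2l//.
  by rewrite mulr_ge0// ltW// (lt_le_trans _ q1).
by apply: ge0_ler_powR; rewrite ?nnegrE ?subr_ge0// ltW// (le_lt_trans b0).
Qed.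

Lemma prox_inv_small tau q r : 1 < q -> 0 < r ->
  exists2 e, 0 < e & prox_inv tau q e < r.
Proof.
move=> q1 r0.
have cvg0 : prox_inv tau q x @[x --> 0^'+] --> 0 + tau * q * 0.
  apply: cvgD; first exact: cvg_at_right_filter.
  by apply: cvgM; [exact: cvg_cst | apply: powR_cvg0; rewrite subr_gt0].
rewrite mulr0 addr0 in cvg0.
near (0 : R)^'+ => e.
exists e; first by near: e; exact: nbhs_right_gt.
by near: e; exact: cvgr_lt cvg0 _ r0.
Unshelve. all: end_near. Qed.

Lemma alpha_barP tau q r : 0 < tau -> 1 < q -> 0 < r ->
  0 <= alpha_bar r q tau < r /\ prox_inv tau q (alpha_bar r q tau) = r.
Proof.
move=> t0 q1 r0; rewrite /alpha_bar gt_eqF//.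
apply: (xgetPex 0 (P := [set a | 0 <= a < r /\ a + tau * q * powR a (q - 1) = r])).
have q0 : 0 < q by rewrite (lt_trans _ q1).
have [e e0 He] := prox_inv_small tau q1 r0.
have er : e < r.
  by rewrite (le_lt_trans _ He)// lerDl mulr_ge0 ?powR_ge0// mulr_ge0// ltW.
have Hr : r < prox_inv tau q r.
  by rewrite ltrDl mulr_gt0 ?mulr_gt0// powR_gt0.
have [c ec Hc] : exists2 c, c \in `[e, r] & prox_inv tau q c = r.
  apply: IVT; first exact: ltW.
    apply: derivable_within_continuous => x; rewrite in_itv/= => /andP[ex _].
    apply: derivableD; first exact: derivable_id.
    apply: derivableM; first exact: derivable_cst.
    by apply: derivable_powR; rewrite in_itv/= andbT (lt_le_trans e0).
  by rewrite ge_min le_max (ltW He) (ltW Hr) orbT.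
move: ec; rewrite in_itv/= => /andP[ec cr].
exists c; split => //; rewrite (le_trans (ltW e0))//= lt_neqAle cr andbT.
by apply: contra_eq_neq Hc => ->; rewrite gt_eqF.
Qed.

Definition prox_pow tau q r :=
  if q == 1 then Num.max (r - tau) 0
  else if q == 2 then r / (1 + 2 * tau)
  else alpha_bar r q tau.

(* Optimality condition for [b >= 0]: either the derivative vanishes, or the
   minimizer is the boundary point 0 and the derivative there is nonnegative. *)
Lemma prox_powP tau q r : 0 < tau -> 0 <= r -> 1 <= q <= 2 ->
  0 <= prox_pow tau q r <= r /\
  (prox_inv tau q (prox_pow tau q r) = r \/
   prox_pow tau q r = 0 /\ r <= prox_inv tau q 0).
Proof.
move=> t0 r0 /andP[q1 q2]; rewrite /prox_pow.
have [->|qn1] := eqVneq q 1.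
  rewrite /prox_inv subrr !powRr0 !mulr1.
  have [rt|tr] := leP r tau.
    by rewrite max_r ?subr_le0// lexx r0; split=> //; right; rewrite add0r.
  rewrite max_l; last by rewrite subr_ge0 ltW.
  by split; [rewrite subr_ge0 gerBl !ltW | left; rewrite subrK].
have [->|qn2] := eqVneq q 2.
  have k0 : 0 < 1 + 2 * tau by rewrite addr_gt0// mulr_gt0.
  split.
    by rewrite divr_ge0 ?(ltW k0)//= ler_pdivrMr//; nra.
  left; rewrite /prox_inv [2 - 1](_ : _ = 1); last by rewrite -[2]/(1 + 1) addrK.
  by rewrite powRr1 ?divr_ge0 ?(ltW k0)//; field; rewrite gt_eqF.
have q1' : 1 < q by rewrite lt_def qn1.
have [->|rn0] := eqVneq r 0.
  rewrite /alpha_bar eqxx lexx; split=> //; right; split=> //.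
  by rewrite /prox_inv powR0 ?mulr0 ?addr0// subr_eq0 gt_eqF.
have r0' : 0 < r by rewrite lt_def rn0.
have [/andP[a0 ar] Ha] := alpha_barP t0 q1' r0'.
by rewrite a0 ltW//; split=> //; left.
Qed.

Lemma prox_pow_min tau q r b : 0 < tau -> 0 <= r -> 1 <= q <= 2 -> 0 <= b ->
  moreau_obj tau q r (prox_pow tau q r) <= moreau_obj tau q r b.
Proof.
move=> t0 r0 qI b0.
have [/andP[a0 ar] opt] := prox_powP t0 r0 qI.
set a := prox_pow tau q r in a0 ar opt *.
set P := powR a (q - 1).
have tangent := powR_tangent_le (andP qI).1 a0 b0.
have slope : 0 <= (b - a) * (tau * q * P - (r - a)).
  case: opt => [|[a00]]; rewrite /prox_inv -/P.
    by move=> <-; rewrite [a + _]addrC addrK subrr mulr0.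
  by rewrite /P a00 add0r !subr0 => rP; apply: mulr_ge0; rewrite ?subr_ge0.
rewrite -subr_ge0 /moreau_obj.
have -> : powR b q + (r - b) ^+ 2 / (2 * tau) - (powR a q + (r - a) ^+ 2 / (2 * tau)) =
    (powR b q - powR a q - q * P * (b - a)) +
    (2 * ((b - a) * (tau * q * P - (r - a))) + (b - a) ^+ 2) / (2 * tau).
  by field; rewrite gt_eqF.
apply: addr_ge0; first by rewrite subr_ge0 lerBrDl.
apply: divr_ge0; last by rewrite mulr_ge0 ?ltW.
by rewrite addr_ge0 ?sqr_ge0// mulr_ge0.
Qed.

Lemma prox_pow_lt tau q r c : 0 < tau -> 0 <= r -> 1 <= q <= 2 -> 0 < c ->
  (prox_pow tau q r < c) = (r < prox_inv tau q c).
Proof.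
move=> t0 r0 qI c0.
have [/andP[a0 _] opt] := prox_powP t0 r0 qI.
have q1 := (andP qI).1.
apply/idP/idP => ac.
  case: opt => [<-|[_ rH]]; first exact: prox_inv_lt.
  exact: le_lt_trans rH (prox_inv_lt t0 q1 (lexx 0) c0).
rewrite ltNge; apply/negP => ca.
case: opt => [Ha|[a00 _]]; last by move: ca; rewrite a00 leNgt c0.
by move: (prox_inv_le t0 q1 (ltW c0) ca); rewrite Ha leNgt ac.
Qed.

End scalar_problem.

Section euclidean_tuples.
Variables (R : realType) (m : nat).
Implicit Types (c : R) (z w : m.-tuple R).

Lemma eucl_ge0 z : 0 <= eucl z.
Proof. exact: sqrtr_ge0. Qed.

Lemma sqr_eucl z : eucl z ^+ 2 = \sum_(i < m) tnth z i ^+ 2.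
Proof. by rewrite sqr_sqrtr// sumr_ge0// => i _; exact: sqr_ge0. Qed.

Lemma eucl_eq0_tnth z i : eucl z = 0 -> tnth z i = 0.
Proof.
move=> z0; have /eqP : \sum_(j < m) tnth z j ^+ 2 = 0 by rewrite -sqr_eucl z0 expr0n.
rewrite psumr_eq0; last by move=> j _; exact: sqr_ge0.
by move=> /allP/(_ i (mem_index_enum _)); rewrite /= sqrf_eq0 => /eqP.
Qed.

Lemma sum_sqr_lincomb (a b : R) z w :
  \sum_(i < m) (a * tnth z i - b * tnth w i) ^+ 2 =
  a ^+ 2 * \sum_(i < m) tnth z i ^+ 2 - 2 * a * b * \sum_(i < m) tnth z i * tnth w i
  + b ^+ 2 * \sum_(i < m) tnth w i ^+ 2.
Proof. by rewrite !mulr_sumr -sumrB -big_split; apply: eq_bigr => i _ /=; ring. Qed.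

Lemma sum_mul_le_eucl z w : \sum_(i < m) tnth z i * tnth w i <= eucl z * eucl w.
Proof.
have [z0|zn0] := eqVneq (eucl z) 0.
  by rewrite z0 mul0r big1// => i _; rewrite eucl_eq0_tnth// mul0r.
have [w0|wn0] := eqVneq (eucl w) 0.
  by rewrite w0 mulr0 big1// => i _; rewrite (eucl_eq0_tnth i w0) mulr0.
have zw0 : 0 < eucl z * eucl w by rewrite mulr_gt0// lt_def ?zn0 ?wn0 eucl_ge0.
have := sum_sqr_lincomb (eucl w) (eucl z) z w.
rewrite -!sqr_eucl => expand.
have : 0 <= \sum_(i < m) (eucl w * tnth z i - eucl z * tnth w i) ^+ 2.
  by apply: sumr_ge0 => i _; exact: sqr_ge0.
rewrite expand; nra.
Qed.

Lemma sqr_eucl_tsub_ge z w : (eucl z - eucl w) ^+ 2 <= eucl (tsub z w) ^+ 2.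
Proof.
have -> : eucl (tsub z w) ^+ 2 = \sum_(i < m) (1 * tnth z i - 1 * tnth w i) ^+ 2.
  by rewrite sqr_eucl; apply: eq_bigr => i _; rewrite tnth_mktuple !mul1r.
rewrite sum_sqr_lincomb -!sqr_eucl.
by have := sum_mul_le_eucl z w; nra.
Qed.

Definition tscale c z : m.-tuple R := [tuple c * tnth z i | i < m].

Lemma eucl_tscale c z : eucl (tscale c z) = `|c| * eucl z.
Proof.
rewrite /eucl -sqrtr_sqr -sqrtrM ?sqr_ge0// mulr_sumr.
by congr Num.sqrt; apply: eq_bigr => i _; rewrite tnth_mktuple exprMn.
Qed.

Lemma tsub_tscale c z : tsub z (tscale c z) = tscale (1 - c) z.
Proof. by apply: eq_from_tnth => i; rewrite !tnth_mktuple mulrBl mul1r. Qed.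

End euclidean_tuples.

Section pointwise_problem.
Variables (R : realType) (m : nat) (tau q : R).
Hypotheses (tau_gt0 : 0 < tau) (q_itv : 1 <= q <= 2).
Implicit Types z w : m.-tuple R.

Lemma T_tau_moreau_obj z :
  T_tau tau z q = moreau_obj tau q (eucl z) (prox_pow tau q (eucl z)).
Proof.
have q1 := (andP q_itv).1.
rewrite /T_tau /prox_pow /moreau_obj; set r := eucl z.
have r0 : 0 <= r := eucl_ge0 z.
have [->|qn1] := eqVneq q 1.
  have [rt|tr] := leP r tau.
    by rewrite max_r ?subr_le0// powR0 ?oner_eq0// add0r subr0.
  rewrite max_l ?powRr1 ?subr_ge0 ?ltW//.
  by field; rewrite gt_eqF.
have [->|qn2] := eqVneq q 2.
  have k0 : 0 < 1 + 2 * tau by rewrite addr_gt0// mulr_gt0.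
  rewrite -[X in powR _ X]/(2%:R) powR_mulrn ?divr_ge0 ?(ltW k0)//.
  by field; rewrite !gt_eqF.
have q1' : 1 < q by rewrite lt_def qn1.
have [->|rn0] := eqVneq r 0.
  by rewrite /alpha_bar eqxx powR0 ?gt_eqF ?(lt_trans ltr01)// subrr expr0n /= !mul0r addr0.
have r0' : 0 < r by rewrite lt_def rn0.
have q0 : 0 < q := lt_trans ltr01 q1'.
have [/andP[a0 _]] := alpha_barP tau_gt0 q1' r0'; rewrite /prox_inv.
set a := alpha_bar r q tau in a0 * => Ha.
have -> : powR a q = a * ((r - a) / (tau * q)).
  by rewrite -(mulr_powRB1 a0 q0) -Ha; field; rewrite !gt_eqF.
by field; rewrite !gt_eqF.
Qed.

Lemma T_tau_le z w :
  T_tau tau z q <= powR (eucl w) q + eucl (tsub z w) ^+ 2 / (2 * tau).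
Proof.
rewrite T_tau_moreau_obj.
apply: le_trans (prox_pow_min tau_gt0 (eucl_ge0 z) q_itv (eucl_ge0 w)) _.
rewrite /moreau_obj lerD2l ler_pM2r ?invr_gt0 ?mulr_gt0//.
exact: sqr_eucl_tsub_ge.
Qed.

(* When [z = 0] the junk value [a / 0 = 0] still yields the minimizer [0]. *)
Definition prox_vec z : m.-tuple R := tscale (prox_pow tau q (eucl z) / eucl z) z.

Lemma eucl_prox_vec z :
  eucl (prox_vec z) = prox_pow tau q (eucl z) /\
  eucl (tsub z (prox_vec z)) = eucl z - prox_pow tau q (eucl z).
Proof.
have [/andP[a0 ar] _] := prox_powP tau_gt0 (eucl_ge0 z) q_itv.
rewrite /prox_vec tsub_tscale !eucl_tscale.
move: a0 ar; set r := eucl z; set a := prox_pow tau q r => a0 ar.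
have [r0|rn0] := eqVneq r 0.
  have -> : a = 0 by apply/eqP; rewrite eq_le a0 -r0 ar.
  by rewrite r0 !mulr0 subr0.
have r0 : 0 < r by rewrite lt_def rn0 eucl_ge0.
rewrite (ger0_norm (divr_ge0 a0 (ltW r0))) ger0_norm; last first.
  by rewrite subr_ge0 ler_pdivrMr ?mul1r.
by rewrite mulrBl mul1r divfK.
Qed.

Lemma T_tau_prox_vec z :
  T_tau tau z q = powR (eucl (prox_vec z)) q + eucl (tsub z (prox_vec z)) ^+ 2 / (2 * tau).
Proof. by have [-> ->] := eucl_prox_vec z; rewrite T_tau_moreau_obj. Qed.

End pointwise_problem.

Section measurability.
Context d (T : measurableType d) (R : realType) (D : set T).
Hypothesis mD : measurable D.

Lemma measurable_fun_tuple n (h : T -> n.-tuple R) :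
  (forall i, measurable_fun D (fun x => tnth (h x) i)) -> measurable_fun D h.
Proof.
move=> mh; apply: (@measurability _ _ _ _ D h (\big[setU/set0]_(i < n)
  preimage_set_system setT (fun t : n.-tuple R => tnth t i) measurable)) => //.
move=> _ [B + <-]; rewrite -bigcup_seq => -[i _ [C mC <-]].
by rewrite setTI -comp_preimage; exact: mh.
Qed.

Lemma measurable_fun_tsub m (f h : T -> m.-tuple R) :
  measurable_fun D f -> measurable_fun D h ->
  measurable_fun D (fun x => tsub (f x) (h x)).
Proof.
move=> mf mh; apply: measurable_fun_tuple => i.
apply: (eq_measurable_fun (fun x => tnth (f x) i - tnth (h x) i)).
  by move=> x _; rewrite tnth_mktuple.
by apply: measurable_funB; apply: measurableT_comp (measurable_tnth i) _.
Qed.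

Lemma measurable_fun_powR (u v : T -> R) :
  measurable_fun D u -> measurable_fun D v -> (forall x, D x -> v x != 0) ->
  measurable_fun D (fun x => powR (u x) (v x)).
Proof.
move=> mu mv v0.
apply: (eq_measurable_fun (fun x => if u x == 0 then 0 else expR (v x * ln (u x)))).
  by move=> x; rewrite inE /powR => Dx; case: ifP; rewrite ?(negbTE (v0 x Dx)).
apply: measurable_fun_if => //; first exact: measurable_fun_eqr.
apply: (measurable_funS mD) => //.
apply: measurableT_comp; first exact: measurable_expR.
by apply: measurable_funM => //; apply: measurableT_comp mu.
Qed.

(* By [prox_pow_lt] the sublevel sets [prox_pow < c] are the sets [r < prox_inv c]. *)
Lemma measurable_fun_prox_pow (tau : R) (r q : T -> R) : 0 < tau ->
  measurable_fun D r -> measurable_fun D q ->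
  (forall x, D x -> 0 <= r x) -> (forall x, D x -> 1 <= q x <= 2) ->
  measurable_fun D (fun x => prox_pow tau (q x) (r x)).
Proof.
move=> t0 mr mq r0 qI.
apply: (measurability _ (RGenInftyO.measurableE R)) => _ [_ [c ->] <-].
have [c0|c0] := ltP 0 c; last first.
  rewrite [X in measurable X](_ : _ = set0); first exact: measurable0.
  apply/seteqP; split => x // [Dx]; rewrite /= in_itv/=.
  have [/andP[a0 _] _] := prox_powP t0 (r0 x Dx) (qI x Dx).
  by move=> ac; have := lt_le_trans (le_lt_trans a0 ac) c0; rewrite ltxx.
rewrite [X in measurable X](_ : _ =
    D `&` (fun x => r x < prox_inv tau (q x) c) @^-1` [set true]).
  apply: measurable_fun_ltr => //; apply: measurable_funD => //.
  apply: measurable_funM; first exact: measurable_funM.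
  by apply: measurableT_comp (measurable_powRr c) _; exact: measurable_funB.
by apply/seteqP; split => x [Dx]; rewrite /= in_itv/= prox_pow_lt ?r0 ?qI.
Qed.

End measurability.

Lemma measurable_eucl (R : realType) (m : nat) :
  measurable_fun [set: m.-tuple R] (@eucl R m).
Proof.
apply: measurableT_comp.
  by apply: continuous_measurable_fun; exact: sqrt_continuous.
by apply: measurable_sum => i; apply: measurable_funX; exact: measurable_tnth.
Qed.

Section open_sets_measurable.
Variables (R : realType) (d : nat).

(* Balls of ['rV[R]_d] are for the max norm, so rational boxes form a countable base. *)
Definition rat_box (c : d.-tuple rat) (k : nat) : set (d.-tuple R) :=
  [set t | forall i, ball (ratr (tnth c i) : R) k.+1%:R^-1 (tnth t i)].

Lemma measurable_rat_box c k : measurable (rat_box c k).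
Proof.
rewrite [X in measurable X](_ : _ = \bigcap_(i in [set: 'I_d])
    ((@tnth d R)^~ i @^-1` ball (ratr (tnth c i) : R) k.+1%:R^-1)).
  apply: fin_bigcap_measurable; first exact: finite_finset.
  move=> i _; rewrite -[X in measurable X]setTI.
  by apply: measurable_tnth => //; exact: measurable_ball.
by apply/seteqP; split => t /= tc i; [move=> _; exact: tc | exact: tc i I].
Qed.

Lemma rat_box_sub_open (Omega : set 'rV[R]_d) t :
  open Omega -> Omega (rv_of_tuple t) ->
  exists ck : d.-tuple rat * nat,
    rat_box ck.1 ck.2 t /\ rat_box ck.1 ck.2 `<=` rv_of_tuple @^-1` Omega.
Proof.
move=> oO Ot; have /nbhs_ballP[e e0 eO] : nbhs (rv_of_tuple t) Omega by exact: oO.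
have [k] := @ltr_add_invr R 0 (e / 2) (divr_gt0 e0 (ltr0Sn _ 1)); rewrite add0r => ke.
have [c tc] : {c : 'I_d -> rat & forall i, ball (ratr (c i) : R) k.+1%:R^-1 (tnth t i)}.
  apply: (@choice _ _ (fun i q => ball (ratr q : R) k.+1%:R^-1 (tnth t i))) => i.
  have : tnth t i - k.+1%:R^-1 < tnth t i + k.+1%:R^-1.
    by rewrite ltrD2l gtrN// invr_gt0.
  by move=> /rat_in_itvoo[q]; rewrite in_itv/= -ltr_distlC distrC; exists q.
exists ([tuple c i | i < d], k); split => [i|y ty]; rewrite /= ?tnth_mktuple//.
apply: eO; split => // i j; rewrite !mxE.
have := ty j; rewrite /ball/= tnth_mktuple => cy.
rewrite (le_lt_trans (ler_distD (ratr (c j)) _ _))// [e]splitr.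
by apply: ltrD; apply: lt_trans ke; rewrite // distrC; exact: tc.
Qed.

Lemma measurable_rv_preimage (Omega : set 'rV[R]_d) :
  open Omega -> measurable (rv_of_tuple @^-1` Omega : set (d.-tuple R)).
Proof.
move=> oO; set D := rv_of_tuple @^-1` Omega.
pose F (ck : d.-tuple rat * nat) :=
  if `[< rat_box ck.1 ck.2 `<=` D >] then rat_box ck.1 ck.2 else set0.
rewrite [X in measurable X](_ : _ = \bigcup_ck F ck).
  apply: countable_bigcupT_measurable => // ck; rewrite /F.
  by case: asboolP => _; [exact: measurable_rat_box | exact: measurable0].
apply/seteqP; split => [t Dt|t [ck _]]; rewrite /F; last first.
  by case: asboolP => // /[apply].
have [ck [tck ckD]] := rat_box_sub_open oO Dt.
by exists ck => //; case: asboolP.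
Qed.

End open_sets_measurable.

Section moreau_integral.
Variables (R : realType) (d m : nat) (mu : {measure set (d.-tuple R) -> \bar R}).
Variables (D : set (d.-tuple R)) (p : d.-tuple R -> R) (tau : R).
Hypotheses (mD : measurable D) (tau_gt0 : 0 < tau) (mp : measurable_fun D p).
Hypothesis p_itv : forall x, D x -> 1 <= p x <= 2.
Implicit Types f h : d.-tuple R -> m.-tuple R.

Let p_neq0 x : D x -> p x != 0.
Proof. by move=> /p_itv/andP[p1 _]; rewrite gt_eqF// (lt_le_trans ltr01). Qed.

Let measurable_fun_eucl h : measurable_fun D h -> measurable_fun D (fun x => eucl (h x)).
Proof. exact: measurableT_comp (@measurable_eucl R m). Qed.

Lemma measurable_fun_moreau_integrand f h : measurable_fun D f -> measurable_fun D h ->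
  measurable_fun D (fun x =>
    powR (eucl (h x)) (p x) + eucl (tsub (f x) (h x)) ^+ 2 / (2 * tau)).
Proof.
move=> mf mh; apply: measurable_funD.
  by apply: measurable_fun_powR => //; exact: measurable_fun_eucl.
apply: measurable_funM => //; apply: measurable_funX.
by apply: measurable_fun_eucl; exact: measurable_fun_tsub.
Qed.

Lemma moreau_objective_integral f h : measurable_fun D f -> measurable_fun D h ->
  (rho_p mu D p h + ((2 * tau)^-1)%:E * L2sq mu D f h)%E =
  (\int[mu]_(x in D)
    (powR (eucl (h x)) (p x) + eucl (tsub (f x) (h x)) ^+ 2 / (2 * tau))%:E)%E.
Proof.
move=> mf mh; have t2 : 0 <= (2 * tau)^-1 by rewrite invr_ge0 mulr_ge0// ltW.
have mA : measurable_fun D (fun x => powR (eucl (h x)) (p x)).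
  by apply: measurable_fun_powR => //; exact: measurable_fun_eucl.
have mB : measurable_fun D (fun x => eucl (tsub (f x) (h x)) ^+ 2).
  by apply: measurable_funX; apply: measurable_fun_eucl; exact: measurable_fun_tsub.
rewrite /rho_p /L2sq -ge0_integralZl_EFin//; last 2 first.
- by move=> x _; rewrite lee_fin sqr_ge0.
- exact/measurable_EFinP.
rewrite -ge0_integralD//.
- by apply: eq_integral => x _; rewrite -EFinM -EFinD mulrC.
- by move=> x _; rewrite lee_fin powR_ge0.
- exact/measurable_EFinP.
- by move=> x _; rewrite lee_fin mulr_ge0// sqr_ge0.
- by apply/measurable_EFinP; exact: measurable_funM.
Qed.

Lemma measurable_fun_prox_vec f : measurable_fun D f ->
  measurable_fun D (fun x => prox_vec tau (p x) (f x)).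
Proof.
move=> mf; apply: measurable_fun_tuple => // i.
apply: (eq_measurable_fun (fun x =>
    prox_pow tau (p x) (eucl (f x)) * powR (eucl (f x)) (-1) * tnth (f x) i)).
  by move=> x _; rewrite tnth_mktuple powR_inv1// eucl_ge0.
apply: measurable_funM; last exact: measurableT_comp (measurable_tnth i) mf.
apply: measurable_funM.
  apply: measurable_fun_prox_pow => //; first exact: measurable_fun_eucl.
  by move=> x _; exact: eucl_ge0.
exact: measurableT_comp (measurable_powR _) (measurable_fun_eucl mf).
Qed.

Lemma inL2_prox_vec f : inL2 mu D f -> inL2 mu D (fun x => prox_vec tau (p x) (f x)).
Proof.
move=> [mf fL2]; have mg := measurable_fun_prox_vec mf.
split=> //; apply: le_lt_trans fL2; apply: ge0_le_integral => //.
- by move=> x _; rewrite lee_fin sqr_ge0.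
- by apply/measurable_EFinP; apply: measurable_funX; exact: measurable_fun_eucl.
- by apply/measurable_EFinP; apply: measurable_funX; exact: measurable_fun_eucl.
move=> x Dx; have [-> _] := eucl_prox_vec tau_gt0 (p_itv Dx) (f x).
have [/andP[a0 ar] _] := prox_powP tau_gt0 (eucl_ge0 (f x)) (p_itv Dx).
by rewrite lee_fin ler_sqr// nnegrE// eucl_ge0.
Qed.

End moreau_integral.

Unset Implicit Arguments.

Theorem mainTheorem4 (R : realType) (d m : nat)
  (mu : {measure set (d.-tuple R) -> \bar R}) (Hmu : is_lebesgue_Rd mu)
  (Omega : set 'rV[R]_d) (HOopen : open Omega) (HOconn : connected Omega)
  (Hm : (1 <= m)%N)
  (p : d.-tuple R -> R)
  (Hpmeas : measurable_fun (rv_of_tuple @^-1` Omega) p)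
  (Hprange : forall x, (rv_of_tuple @^-1` Omega) x -> 1 <= p x <= 2)
  (tau : R) (Htau : 0 < tau)
  (f : d.-tuple R -> m.-tuple R) (Hf : inL2 mu (rv_of_tuple @^-1` Omega) f) :
  moreau_rho mu (rv_of_tuple @^-1` Omega) p tau f =
  (\int[mu]_(x in rv_of_tuple @^-1` Omega) (T_tau tau (f x) (p x))%:E)%E.
Proof.
set D := rv_of_tuple @^-1` Omega.
have mD : measurable D := measurable_rv_preimage HOopen.
have [mf _] := Hf.
pose g x := prox_vec tau (p x) (f x).
have mg : measurable_fun D g := measurable_fun_prox_vec mD Htau Hpmeas Hprange mf.
have T_g x : D x -> T_tau tau (f x) (p x) =
    powR (eucl (g x)) (p x) + eucl (tsub (f x) (g x)) ^+ 2 / (2 * tau).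
  by move=> Dx; exact: T_tau_prox_vec Htau (Hprange x Dx) (f x).
apply/eqP; rewrite eq_le; apply/andP; split.
  apply: ereal_inf_lbound; exists g; first exact: inL2_prox_vec.
  rewrite moreau_objective_integral//.
  by apply: eq_integral => x /[1!inE] Dx; rewrite T_g.
apply: le_ereal_inf_tmp => _ [h [mh _] <-].
rewrite moreau_objective_integral//.
apply: ge0_le_integral => //.
- move=> x Dx; rewrite lee_fin T_g//.
  by rewrite addr_ge0 ?powR_ge0// mulr_ge0 ?sqr_ge0// invr_ge0 mulr_ge0// ltW.
- apply/measurable_EFinP; apply: (eq_measurable_fun (fun x =>
      powR (eucl (g x)) (p x) + eucl (tsub (f x) (g x)) ^+ 2 / (2 * tau))).
    by move=> x /[1!inE] Dx; rewrite T_g.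
  exact (measurable_fun_moreau_integrand tau mD Hpmeas Hprange mf mg).
- apply/measurable_EFinP.
  exact (measurable_fun_moreau_integrand tau mD Hpmeas Hprange mf mh).
- by move=> x Dx; rewrite lee_fin; exact: T_tau_le Htau (Hprange x Dx) _ _.
Qed.
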